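(* Let $\Gamma_1=(V_1,E_1)$ be a graph and let $\Gamma_2=(V_2,E_2)$ be a $\delta$-regular graph. A set $S\subseteq V_1$ is a global offensive $k$-alliance in $\Gamma_1$ if and only if $S\times V_2$ is a global offensive $(k-\delta)$-alliance in $\Gamma_1\times\Gamma_2$.
   Context: Graphs are finite and simple. In a graph $G=(V,E)$, for $S\subseteq V$ and $v\in V$, $\delta_S(v)$ is the number of neighbours of $v$ in $S$, $\overline{S}=V\setminus S$, and $\partial(S)$ the set of vertices of $\overline{S}$ with a neighbour in $S$. A nonempty $S$ is an offensive $k$-alliance in $G$ if $\delta_S(v)\ge\delta_{\overline{S}}(v)+k$ for every $v\in\partial(S)$, and a global offensive $k$-alliance if moreover it is dominating. The Cartesian product $\Gamma_1\times\Gamma_2$ has vertex set $V_1\times V_2$, with $(u,v)\sim(u',v')$ iff either $u=u'$ and $v\sim v'$, or $v=v'$ and $u\sim u'$. *)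

From mathcomp Require Import all_boot all_order all_algebra.
Set Implicit Arguments. Unset Strict Implicit. Unset Printing Implicit Defensive.
Import Order.TTheory GRing.Theory Num.Theory.

Definition simple_graph (T : finType) (e : rel T) : Prop :=
  irreflexive e /\ symmetric e.

Definition deg_in (T : finType) (e : rel T) (S : {set T}) (v : T) : nat :=
  #|[set u in S | e v u]|.

Definition bdry (T : finType) (e : rel T) (S : {set T}) : {set T} :=
  [set v in ~: S | [exists u in S, e v u]].

Definition offensive_alliance (T : finType) (e : rel T) (k : int) (S : {set T}) : Prop :=
  S != set0 /\
  forall v, v \in bdry e S ->
    ((deg_in e S v)%:Z >= (deg_in e (~: S) v)%:Z + k)%R.

Definition dominating (T : finType) (e : rel T) (S : {set T}) : Prop :=
  forall v, v \notin S -> exists2 u, u \in S & e v u.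

Definition global_offensive_alliance (T : finType) (e : rel T) (k : int) (S : {set T}) : Prop :=
  offensive_alliance e k S /\ dominating e S.

Definition regular (T : finType) (e : rel T) (d : nat) : Prop :=
  forall v, #|[set w | e v w]| = d.

Definition cartesian_prod (T1 T2 : finType) (e1 : rel T1) (e2 : rel T2) : rel (T1 * T2) :=
  fun x y => ((x.1 == y.1) && e2 x.2 y.2) || ((x.2 == y.2) && e1 x.1 y.1).

Definition setXT (T1 T2 : finType) (S : {set T1}) : {set T1 * T2} :=
  setX S [set: T2].

From mathcomp Require Import all_boot all_order all_algebra.
Set Implicit Arguments. Unset Strict Implicit. Unset Printing Implicit Defensive.
Import GRing.Theory.

(* Every vertex (a, b) outside S x V2 has exactly the neighbours of a in S inside
   S x V2 (all in the fibre V1 x {b}), and outside it the neighbours of a outside S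
   plus the delta neighbours of b in its own fibre {a} x V2.  Hence the boundary of
   S x V2 is (boundary of S) x V2 and each alliance inequality there is the one for
   a in Gamma1 with delta added to the right-hand side. *)

Section CartesianProductFibres.

Variables (T1 T2 : finType) (e1 : rel T1) (e2 : rel T2) (S : {set T1}).

Local Notation G := (cartesian_prod e1 e2).
Local Notation SV := (setXT T2 S).

Lemma mem_setXT (a : T1) (b : T2) : ((a, b) \in SV) = (a \in S).
Proof. by rewrite /setXT inE /= inE andbT. Qed.

Lemma cartesian_prod_notin (a x : T1) (b y : T2) : a \notin S -> x \in S ->
  G (a, b) (x, y) = (b == y) && e1 a x.
Proof.
move=> aS xS; rewrite /cartesian_prod /=.
by have [ax|//] := eqVneq a x; rewrite ax xS in aS.
Qed.

Lemma bdry_setXT (a : T1) (b : T2) : ((a, b) \in bdry G SV) = (a \in bdry e1 S).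
Proof.
rewrite /bdry !inE /= andbT; case aS: (a \in S) => //=.
apply/existsP/existsP => [[[x y]]|[x /andP [xS ea]]].
- by rewrite mem_setXT => /andP [xS]; rewrite cartesian_prod_notin ?aS // => /andP [_];
    exists x; rewrite xS.
- by exists (x, b); rewrite mem_setXT xS cartesian_prod_notin ?aS // eqxx.
Qed.

Lemma deg_in_setXT (a : T1) (b : T2) : a \notin S ->
  deg_in G SV (a, b) = deg_in e1 S a.
Proof.
move=> aS; have inj_row : injective (fun x : T1 => (x, b)) by move=> x y [].
rewrite /deg_in -(card_imset _ inj_row).
apply: eq_card => -[x y]; rewrite !inE /= andbT.
apply/idP/imsetP => [/andP [xS]|[z]].
- by rewrite cartesian_prod_notin // => /andP [/eqP <- ea]; exists x; rewrite ?inE ?xS.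
- by rewrite inE => /andP [zS ez] [-> ->]; rewrite zS cartesian_prod_notin // eqxx.
Qed.

Lemma deg_in_setCXT (d : nat) (a : T1) (b : T2) :
  irreflexive e2 -> regular e2 d -> a \notin S ->
  deg_in G (~: SV) (a, b) = (deg_in e1 (~: S) a + d)%N.
Proof.
move=> irr2 reg aS; rewrite /deg_in -(reg b).
set A := [set x in ~: S | e1 a x]; set B := [set w | e2 b w].
have inj_row : injective (fun x : T1 => (x, b)) by move=> x y [].
have inj_col : injective (fun y : T2 => (a, y)) by move=> x y [].
rewrite -(card_imset A inj_row) -(card_imset B inj_col) -cardsUI.
have -> : [set (x, b) | x in A] :&: [set (a, y) | y in B] = set0.
  apply/setP => -[x y]; rewrite !inE; apply/negP.
  by case/andP=> /imsetP [z _ [_ ->]] /imsetP [w]; rewrite inE => ew [_ eb]; rewrite eb irr2 in ew.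
rewrite cards0 addn0; apply: eq_card => -[x y]; rewrite !inE /= andbT.
apply/idP/orP => [/andP [xS /orP [/andP [/eqP /= ax ey]|/andP [/eqP /= bx ex]]]|].
- by right; apply/imsetP; exists y; rewrite ?inE // ax.
- by left; apply/imsetP; exists x; rewrite ?inE ?xS // bx.
- case=> /imsetP [z]; rewrite !inE /cartesian_prod /=.
  + by move=> /andP [zS ez] [-> ->]; rewrite zS eqxx ez orbT.
  + by move=> ez [-> ->]; rewrite aS eqxx ez.
Qed.

Lemma offensive_alliance_setXT (b0 : T2) (d : nat) (k : int) :
  irreflexive e2 -> regular e2 d ->
  offensive_alliance e1 k S <-> offensive_alliance G (k - d%:Z)%R SV.
Proof.
move=> irr2 reg.
have bdry_notin a : a \in bdry e1 S -> a \notin S by rewrite !inE => /andP [].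
have ineq_setXT a b : a \in bdry e1 S ->
    ((deg_in G SV (a, b))%:Z >= (deg_in G (~: SV) (a, b))%:Z + (k - d%:Z))%R =
    ((deg_in e1 S a)%:Z >= (deg_in e1 (~: S) a)%:Z + k)%R.
  move=> /bdry_notin aS; rewrite deg_in_setXT // (deg_in_setCXT b irr2 reg aS) PoszD.
  by congr (_ <= _)%R; rewrite addrACA subrr addr0.
have nonempty_setXT : (SV != set0) = (S != set0).
  apply/set0Pn/set0Pn => [[[x y]]|[x xS]]; last by exists (x, b0); rewrite mem_setXT.
  by rewrite mem_setXT; exists x.
rewrite /offensive_alliance nonempty_setXT.
split=> -[ne ineq]; split=> //.
- by move=> [a b]; rewrite bdry_setXT => ab; rewrite ineq_setXT // ineq.
- by move=> a ab; rewrite -(ineq_setXT a b0) // ineq // bdry_setXT.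
Qed.

Lemma dominating_setXT (b0 : T2) : dominating e1 S <-> dominating G SV.
Proof.
rewrite /dominating; split=> dom.
- move=> [a b]; rewrite mem_setXT => aS; have [x xS ea] := dom a aS.
  by exists (x, b); rewrite ?mem_setXT // /cartesian_prod /= eqxx ea orbT.
- move=> a aS; case: (dom (a, b0)) => [|[x y]]; first by rewrite mem_setXT.
  rewrite mem_setXT => xS /orP [/andP [/eqP ax _]|/andP [_ ea]].
  + by move: ax aS => /= ->; rewrite xS.
  + by exists x.
Qed.

End CartesianProductFibres.

Theorem mainTheorem15 (T1 T2 : finType) (e1 : rel T1) (e2 : rel T2)
  (d : nat) (k : int) (S : {set T1}) :
  simple_graph e1 -> simple_graph e2 -> 0 < #|T2| -> regular e2 d ->
  global_offensive_alliance e1 k S <->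
  global_offensive_alliance (cartesian_prod e1 e2) (k - d%:Z)%R (setXT T2 S).
Proof.
move=> _ [irr2 _] /card_gt0P [b0 _] reg.
have oa := offensive_alliance_setXT e1 S b0 k irr2 reg.
have dom := dominating_setXT e1 e2 S b0.
by split=> -[/oa ? /dom ?].
Qed.
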